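(* Let $\overrightarrow{C}=\bigcup_{j=1}^t m_j\overrightarrow{C_{n_j}}$ be a $\Theta$-oriented 2-regular graph with at least two cycle components (where $n_1<\dots<n_t$ are the distinct cycle lengths, $m_j\ge1$, $\sum_j m_j\ge2$), and let $D$ be a distance set of $\overrightarrow{C}$. Then $\overrightarrow{C}$ is $D$-antimagic if and only if $\min(D)=0$.
   Context: An oriented graph is a simple graph each of whose edges is given one direction (an arc $(u,v)$ goes from $u$ to $v$). For vertices $u,v$, $d(u,v)$ is the length of a shortest directed path from $u$ to $v$ ($d(u,u)=0$, $\infty$ if no path). A distance set of an oriented graph is a nonempty set $D$ of nonnegative integers each of which is a finite distance $d(u,v)$ for some pair of vertices. $N_D(v)=\{y : d(v,y)\in D\}$; for a bijection $f:V\to\{1,\dots,|V|\}$, $\omega_D(v)=\sum_{x\in N_D(v)}f(x)$ (empty sum $0$); $f$ is $D$-antimagic if distinct vertices have distinct $D$-weights, and the graph is $D$-antimagic if such an $f$ exists. An oriented 2-regular graph is an orientation of a disjoint union of cycles, each of length at least $3$. A cycle component on $v_1,\dots,v_n$ is $\Theta$-oriented if it has exactly one source (in-degree $0$) and exactly one sink (out-degree $0$) and these are adjacent, i.e. up to relabeling its arcs are $(v_i,v_{i+1})$, $1\le i\le n-1$, and $(v_1,v_n)$; the oriented 2-regular graph is $\Theta$-oriented if every cycle component is $\Theta$-oriented. *)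

From mathcomp Require Import all_boot.
Set Implicit Arguments. Unset Strict Implicit. Unset Printing Implicit Defensive.

Fixpoint walkb (T : finType) (e : rel T) (k : nat) (u v : T) : bool :=
  if k is k'.+1 then [exists w, e u w && walkb e k' w v] else u == v.

Definition is_dist (T : finType) (e : rel T) (u v : T) (k : nat) : bool :=
  walkb e k u v && [forall j : 'I_k, ~~ walkb e j u v].

Definition distance_set (T : finType) (e : rel T) (D : pred nat) : Prop :=
  (exists k, D k) /\ (forall k, D k -> exists u v, is_dist e u v k).

Definition ND (T : finType) (e : rel T) (D : pred nat) (v y : T) : bool :=
  [exists k : 'I_#|T|.+1, is_dist e v y k && D k].

Definition Dweight (T : finType) (e : rel T) (D : pred nat) (f : T -> nat)
  (v : T) : nat := \sum_(x | ND e D v x) f x.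

Definition labeling (T : finType) (f : T -> nat) : Prop :=
  injective f /\ (forall x, 0 < f x <= #|T|).

Definition D_antimagic (T : finType) (e : rel T) (D : pred nat) : Prop :=
  exists f : T -> nat, labeling f /\ injective (Dweight e D f).

(* Canonical Theta-oriented 2-regular graph with cycle lengths ns:
   component c has vertices 0,...,n-1 (n = nth 0 ns c), arcs (i,i+1) for
   i < n-1 and the arc (0, n-1). *)
Definition theta_vert (ns : seq nat) : finType :=
  {c : 'I_(size ns) & 'I_(nth 0 ns c)}.

Definition theta_arc (ns : seq nat) : rel (theta_vert ns) :=
  fun x y =>
    (tag x == tag y) &&
    ((val (tagged y) == (val (tagged x)).+1) ||
     ((val (tagged x) == 0) && (val (tagged y) == (nth 0 ns (tag x)).-1))).

Definition theta_2reg_multi (T : finType) (e : rel T) : Prop :=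
  exists ns : seq nat,
    [/\ 2 <= size ns, all (fun n => 3 <= n) ns &
      exists phi : T -> theta_vert ns,
        bijective phi /\ forall x y, e x y = theta_arc (phi x) (phi y)].

From mathcomp Require Import all_boot zify.
Set Implicit Arguments. Unset Strict Implicit. Unset Printing Implicit Defensive.

(* Number the vertices of a Θ-cycle of length n by levels: the sink has level 0,
   the source level n-1, and the vertex at distance i from the source along
   the long path level n-1-i.  Then y is reachable from v iff both lie in the
   same component with lev y <= lev v, and d(v,y) = lev v - lev y, except
   that d(source, sink) = 1.

   If 0 is not in D, the D-neighbourhood of every sink is empty, so the sinks
   of two different components both have weight 0.

   If 0 is in D, the weight of v is f v plus the sum of f over the vertices
   below v at a distance in D.  Label greedily: the next label goes to a
   vertex all of whose lower vertices are already labelled, choosing one with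
   the smallest such sum.  Shifting a pair of vertices one level up in a
   component preserves their distance, so the partial sums stay nondecreasing
   in the label, and the weight is then strictly increasing in the label. *)

(* In level coordinates a Θ-cycle is the path n-1 -> n-2 -> ... -> 0 plus the
   chord n-1 -> 0. *)
Definition theta_level (n p : nat) : nat := if p == 0 then n.-1 else n.-1 - p.

Definition level_step (n a b : nat) : bool := (a == b.+1) || ((a == n.-1) && (b == 0)).

Definition level_walk (n k a b : nat) : bool :=
  (a == b + k) || [&& k == 1, a == n.-1 & b == 0].

(* Meaningful only for b <= a. *)
Definition level_dist (n a b : nat) : nat :=
  if (a == n.-1) && (b == 0) then 1 else a - b.

Lemma theta_level_lt n p : p < n -> theta_level n p < n.
Proof. by rewrite /theta_level; case: eqP; lia. Qed.

Lemma theta_level_inj n p q :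
  p < n -> q < n -> theta_level n p = theta_level n q -> p = q.
Proof. by rewrite /theta_level; case: eqP; case: eqP; lia. Qed.

Lemma theta_level_surj n a : a < n -> exists2 p, p < n & theta_level n p = a.
Proof.
move=> an; exists (if a == n.-1 then 0 else n.-1 - a); rewrite /theta_level;
  by repeat case: eqP; lia.
Qed.

Lemma theta_arc_level n p q : p < n -> q < n ->
  (q == p.+1) || (p == 0) && (q == n.-1) =
  level_step n (theta_level n p) (theta_level n q).
Proof.
rewrite /theta_level /level_step => pn qn.
by case: (p =P 0); case: (q =P 0) => *; apply/idP/idP; lia.
Qed.

Lemma level_walkS n k a b : 2 < n -> a < n ->
  reflect (exists2 c, c < n & level_step n a c && level_walk n k c b)
          (level_walk n k.+1 a b).
Proof.
rewrite /level_walk /level_step => n_gt2 an; apply: (iffP idP).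
  case/orP => [/eqP ab | /and3P [/eqP [k0] /eqP an1 /eqP b0]].
    by exists (b + k); rewrite ?ab ?eqxx //; lia.
  by exists 0; rewrite ?k0 ?an1 ?b0 ?eqxx ?orbT //; lia.
by case=> c _ /andP [step walk]; move: step walk; lia.
Qed.

Lemma level_walk_dist n a b : 2 < n -> b <= a -> level_walk n (level_dist n a b) a b.
Proof. by rewrite /level_walk /level_dist; case: ifP; lia. Qed.

Lemma level_dist_le_walk n k a b : 2 < n -> level_walk n k a b ->
  (b <= a) && (level_dist n a b <= k).
Proof. by rewrite /level_walk /level_dist; case: ifP; lia. Qed.

Lemma level_walk_minE n k a b : 2 < n ->
  level_walk n k a b && [forall j : 'I_k, ~~ level_walk n j a b] =
  (b <= a) && (k == level_dist n a b).
Proof.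
move=> n_gt2; apply/andP/andP => [[walk /forallP shorter] | [ba /eqP ->]].
  have /andP [ba le_dist] := level_dist_le_walk n_gt2 walk; split=> //.
  rewrite eqn_leq le_dist andbT leqNgt; apply/negP => lt_dist.
  by move: (shorter (Ordinal lt_dist)); rewrite /= level_walk_dist.
split; first exact: level_walk_dist.
apply/forallP => j; apply/negP => /(level_dist_le_walk n_gt2) /andP [_].
by rewrite leqNgt ltn_ord.
Qed.

Lemma level_dist_lt n a b : 1 < n -> a < n -> level_dist n a b < n.
Proof. by rewrite /level_dist; case: ifP; lia. Qed.

Lemma level_dist0 n a : 1 < n -> level_dist n a a = 0.
Proof. by rewrite /level_dist; case: ifP; lia. Qed.

Lemma level_distSS n a b : a.+1 < n -> level_dist n a.+1 b.+1 = level_dist n a b.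
Proof. by rewrite /level_dist; case: ifP; case: ifP; lia. Qed.

Lemma leq_sum_inj (I : finType) (A B : pred I) (h : I -> I) (F : I -> nat) :
  {in A &, injective h} -> {in A, forall i, B (h i)} ->
  \sum_(i | A i) F (h i) <= \sum_(j | B j) F j.
Proof.
move=> hinj hAB; rewrite -(big_imset F hinj) /=.
rewrite big_mkcond [X in _ <= X]big_mkcond /= leq_sum // => j _.
by case: ifP => // /imsetP [i Ai ->]; rewrite hAB.
Qed.

Section GreedyLabeling.

Variables (T : finType) (C : eqType) (comp : T -> C) (lev : T -> nat).
Variable P : C -> nat -> nat -> bool.

Definition below (x y : T) : bool := (comp y == comp x) && (lev y < lev x).

Definition below_sum (g : T -> nat) (v : T) : nat :=
  \sum_(y | below v y && P (comp v) (lev v) (lev y)) g y.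

Definition frontier (S : {set T}) (h : T) : bool :=
  (h \notin S) && [forall y, below h y ==> (y \in S)].

Definition relabel (g : T -> nat) (h : T) (m : nat) (x : T) : nat :=
  if x == h then m else g x.

Record greedy_inv (k : nat) (S : {set T}) (f : T -> nat) : Prop := GreedyInv {
  greedy_card : #|S| = k;
  greedy_below_closed : forall x y, x \in S -> below x y -> y \in S;
  greedy_inj : {in S &, injective f};
  greedy_range : forall x, x \in S -> 0 < f x <= k;
  greedy_below_lt : forall x y, x \in S -> below x y -> f y < f x;
  greedy_sum_mono : forall x y, x \in S -> y \in S -> f x < f y ->
    below_sum f x <= below_sum f y;
  greedy_sum_frontier : forall x h, x \in S -> frontier S h ->
    below_sum f x <= below_sum f h }.

Lemma greedy_inv0 : greedy_inv 0 set0 (fun=> 0).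
Proof. by constructor=> [|x|x y|x|x y|x y|x h]; rewrite ?cards0 ?inE. Qed.

Lemma frontier_exists (S : {set T}) : #|S| < #|T| -> exists h, frontier S h.
Proof.
move=> ltST; have [x0 x0S] : exists x0, x0 \notin S.
  apply/existsP; rewrite -negb_forall; apply: contraTN ltST => /forallP allS.
  by rewrite -leqNgt subset_leq_card //; apply/subsetP => x _; apply: allS.
have [h hS hmin] := @arg_minnP _ x0 (fun x => x \notin S) lev x0S.
exists h; rewrite /frontier hS /=.
apply/forallP => y; apply/implyP => /andP [_]; apply: contraTT => /hmin.
by rewrite -leqNgt.
Qed.

Lemma below_sum_ext (g g' : T -> nat) v :
  (forall y, below v y -> g y = g' y) -> below_sum g v = below_sum g' v.
Proof. by move=> eq_g; apply: eq_bigr => y /andP [/eq_g]. Qed.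

Lemma below_sum_relabel g (S : {set T}) h m v : h \notin S ->
  (forall y, below v y -> y \in S) -> below_sum (relabel g h m) v = below_sum g v.
Proof.
move=> hS vS; apply: below_sum_ext => y /vS yS.
by rewrite /relabel; case: eqP => // yh; rewrite -yh yS in hS.
Qed.

Hypothesis comp_lev_inj : forall x y, comp x = comp y -> lev x = lev y -> x = y.
Hypothesis lev_down : forall x b, b < lev x -> exists2 y, comp y = comp x & lev y = b.
Hypothesis P_shift : forall x a b, lev x = a.+1 -> P (comp x) a b -> P (comp x) a.+1 b.+1.

Lemma below_sum_shift (g G : T -> nat) h h' :
  below h' h -> lev h' = (lev h).+1 ->
  (forall y z, below h y -> comp z = comp y -> lev z = (lev y).+1 -> g y <= G z) ->
  below_sum g h <= below_sum G h'.
Proof.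
move=> /andP [/eqP ch _] lh' gG.
pose up y := odflt y [pick z | (comp z == comp y) && (lev z == (lev y).+1)].
have upP y : below h y -> comp (up y) = comp y /\ lev (up y) = (lev y).+1.
  move=> /andP [/eqP cy ly]; rewrite /up; case: pickP => [z /andP [/eqP -> /eqP ->] //|].
  have [|z cz lz] := @lev_down h' (lev y).+1; first by rewrite lh' ltnS.
  by move=> /(_ z); rewrite cz lz -ch -cy !eqxx.
apply: (@leq_trans (\sum_(y | below h y && P (comp h) (lev h) (lev y)) G (up y))).
  by apply: leq_sum => y /andP [hy _]; have [] := upP y hy; apply: gG.
apply: leq_sum_inj => [y1 y2 /andP [hy1 _] /andP [hy2 _] eq_up|y /andP [hy Py]].
  have [c1 l1] := upP _ hy1; have [c2 l2] := upP _ hy2.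
  apply: comp_lev_inj; first by rewrite -c1 -c2 eq_up.
  by apply/succn_inj; rewrite -l1 -l2 eq_up.
have [cu lu] := upP _ hy; have /andP [/eqP cy ly] := hy.
rewrite /below cu cy ch lu lh' ltnS ly eqxx /=.
by apply: (P_shift lh'); rewrite -ch.
Qed.

Lemma frontier_relabel_lev k S g h h' : greedy_inv k S g -> frontier S h ->
  frontier (h |: S) h' -> below h' h -> lev h' = (lev h).+1.
Proof.
move=> inv /andP [hS _] /andP [_ /forallP h'low] /andP [/eqP ch lt_h].
apply/eqP; rewrite eqn_leq lt_h andbT leqNgt; apply/negP => lt_up.
have [w cw lw] := lev_down lt_up.
have h'w : below h' w by rewrite /below cw eqxx lw lt_up.
have := h'low w; rewrite h'w in_setU1 => /predU1P [wh | wS].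
  by move: lw; rewrite wh => /n_Sn.
have wh : below w h by rewrite /below cw ch eqxx lw ltnSn.
by rewrite (greedy_below_closed inv wS wh) in hS.
Qed.

Lemma frontier_relabel_sum k S g h h' :
  greedy_inv k S g -> frontier S h ->
  (forall h0, frontier S h0 -> below_sum g h <= below_sum g h0) ->
  frontier (h |: S) h' -> below_sum g h <= below_sum (relabel g h k.+1) h'.
Proof.
move=> inv hfr hmin h'fr; have /andP [hS /forallP hlow] := hfr.
have /andP [h'S /forallP h'low] := h'fr.
have h'_below y : below h' y -> y \in h |: S by move=> h'y; move: (h'low y); rewrite h'y.
have [h'h | h'h] := boolP (below h' h); last first.
  have h'_belowS y : below h' y -> y \in S.
    move=> h'y; move: (h'_below y h'y); rewrite in_setU1 => /predU1P [yh|//].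
    by move: h'h; rewrite -yh h'y.
  have h'frS : frontier S h'.
    move: h'S; rewrite /frontier in_setU1 negb_or => /andP [_ ->] /=.
    by apply/forallP => y; apply/implyP; apply: h'_belowS.
  by rewrite (below_sum_relabel _ _ hS h'_belowS); apply: hmin.
have lh' := frontier_relabel_lev inv hfr h'fr h'h.
apply: (below_sum_shift h'h lh') => y z hy czy lz.
have yS : y \in S by move: (hlow y); rewrite hy.
have /andP [/eqP chy lyh] := hy; have /andP [/eqP ch' _] := h'h.
rewrite /relabel; case: eqP => [_ | zh].
  by have /andP [_ ?] := greedy_range inv yS; apply: leqW.
have h'z : below h' z by rewrite /below czy chy ch' eqxx lh' lz ltnS lyh.
have zS : z \in S by move: (h'_below z h'z); rewrite in_setU1 => /predU1P [/zh|].
by apply/ltnW/(greedy_below_lt inv zS); rewrite /below czy eqxx lz ltnSn.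
Qed.

Lemma greedy_inv_relabel k S g h :
  greedy_inv k S g -> frontier S h ->
  (forall h0, frontier S h0 -> below_sum g h <= below_sum g h0) ->
  greedy_inv k.+1 (h |: S) (relabel g h k.+1).
Proof.
move=> inv hfr hmin; have /andP [hS /forallP hlow] := hfr.
have hlowS y : below h y -> y \in S by move=> hy; move: (hlow y); rewrite hy.
have gS x : x \in S -> relabel g h k.+1 x = g x.
  by rewrite /relabel; case: eqP => // ->; rewrite (negbTE hS).
have gh : relabel g h k.+1 h = k.+1 by rewrite /relabel eqxx.
have sumS x : x \in S -> below_sum (relabel g h k.+1) x = below_sum g x.
  move=> xS; apply: (below_sum_relabel _ _ hS) => y xy.
  exact: (greedy_below_closed inv xS xy).
have sumh := below_sum_relabel g k.+1 hS hlowS.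
have rangeS := greedy_range inv.
constructor=> [|x y|x y|x|x y|x y|x h'].
- by rewrite cardsU1 hS (greedy_card inv).
- rewrite !in_setU1 => /predU1P [-> /hlowS -> | xS /(greedy_below_closed inv xS) ->];
    by rewrite orbT.
- rewrite !in_setU1 => /predU1P [-> | xS] /predU1P [-> | yS] //; rewrite ?gh ?gS //.
  + by move=> ky; have := rangeS _ yS; lia.
  + by move=> gx; have := rangeS _ xS; lia.
  + exact: (greedy_inj inv).
- rewrite in_setU1 => /predU1P [-> | xS]; first by rewrite gh leqnn.
  by rewrite gS //; have := rangeS _ xS; lia.
- rewrite in_setU1 => /predU1P [-> /hlowS yS | xS xy]; rewrite ?gh ?gS //.
  + by have := rangeS _ yS; lia.
  + exact: (greedy_below_lt inv xS xy).
  + exact: (greedy_below_closed inv xS xy).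
- rewrite !in_setU1 => /predU1P [-> | xS] /predU1P [-> | yS]; rewrite ?gh ?gS //.
  + by have := rangeS _ yS; lia.
  + by rewrite sumS // sumh => _; apply: (greedy_sum_frontier inv xS hfr).
  + by rewrite !sumS //; apply: (greedy_sum_mono inv xS yS).
- move=> xS' h'fr; apply: leq_trans (frontier_relabel_sum inv hfr hmin h'fr).
  move: xS'; rewrite in_setU1 => /predU1P [-> | xS]; first by rewrite sumh.
  by rewrite sumS //; apply: (greedy_sum_frontier inv xS hfr).
Qed.

Lemma greedy_inv_exists k : k <= #|T| -> exists S g, greedy_inv k S g.
Proof.
elim: k => [|k IH] lekT; first by exists set0, (fun=> 0); apply: greedy_inv0.
have [S [g inv]] := IH (ltnW lekT).
have [h0 h0fr] : exists h, frontier S h.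
  by apply: frontier_exists; rewrite (greedy_card inv).
have [h hfr hmin] := arg_minnP (below_sum g) h0fr.
by exists (h |: S), (relabel g h k.+1); apply: greedy_inv_relabel.
Qed.

Lemma greedy_labeling : exists g : T -> nat,
  [/\ injective g, forall x, 0 < g x <= #|T| &
      forall u v, g u < g v -> below_sum g u <= below_sum g v].
Proof.
have [S [g inv]] := greedy_inv_exists (leqnn #|T|).
have ST : S = setT by apply/eqP; rewrite eqEcard subsetT cardsT (greedy_card inv) /=.
move: inv; rewrite ST => inv; exists g; split=> [x y|x|u v].
- by apply: (greedy_inj inv); rewrite inE.
- by apply: (greedy_range inv); rewrite inE.
- by apply: (greedy_sum_mono inv); rewrite inE.
Qed.

End GreedyLabeling.

Lemma theta_vert_eq ns (u v : theta_vert ns) :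
  tag u = tag v -> val (tagged u) = val (tagged v) -> u = v.
Proof. by case: u => cu tu; case: v => cv tv /= E; subst cv => /val_inj ->. Qed.

Section ThetaComponents.

Variables (ns : seq nat) (T : finType) (e : rel T).
Variables (phi : T -> theta_vert ns) (psi : theta_vert ns -> T).
Hypotheses (phiK : cancel phi psi) (psiK : cancel psi phi).
Hypothesis e_phi : forall x y, e x y = theta_arc (phi x) (phi y).
Hypothesis len_gt2 : forall c : 'I_(size ns), 2 < nth 0 ns c.

Definition vcomp (x : T) : 'I_(size ns) := tag (phi x).
Definition vlen (x : T) : nat := nth 0 ns (vcomp x).
Definition vpos (x : T) : nat := val (tagged (phi x)).
Definition vlev (x : T) : nat := theta_level (vlen x) (vpos x).

Lemma vpos_lt x : vpos x < vlen x.
Proof. exact: ltn_ord. Qed.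

Lemma vlev_lt x : vlev x < vlen x.
Proof. exact/theta_level_lt/vpos_lt. Qed.

Lemma vlen_gt2 x : 2 < vlen x.
Proof. exact: len_gt2. Qed.

Lemma vertex_inj x y : vcomp x = vcomp y -> vlev x = vlev y -> x = y.
Proof.
move=> cxy lxy; rewrite -(phiK x) -(phiK y); congr psi; apply: theta_vert_eq => //.
have lenxy : vlen y = vlen x by rewrite /vlen cxy.
have py : vpos y < vlen x by rewrite -lenxy vpos_lt.
by apply: (theta_level_inj (vpos_lt x) py); move: lxy; rewrite /vlev lenxy.
Qed.

Lemma vertex_exists (c : 'I_(size ns)) a :
  a < nth 0 ns c -> exists2 x, vcomp x = c & vlev x = a.
Proof.
move=> ac; have [p pc <-] := theta_level_surj ac.
exists (psi (Tagged (fun c : 'I_(size ns) => 'I_(nth 0 ns c)) (Ordinal pc)));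
  by rewrite /vlev /vlen /vpos /vcomp psiK.
Qed.

Lemma vlen_le_card x : vlen x <= #|T|.
Proof.
pose at_pos (p : 'I_(vlen x)) := psi (Tagged (fun c : 'I_(size ns) => 'I_(nth 0 ns c)) p).
have at_pos_inj : injective at_pos.
  move=> p q /(congr1 phi); rewrite !psiK.
  by move=> /(congr1 (fun v : theta_vert ns => val (tagged v))) /val_inj.
by have := leq_card at_pos at_pos_inj; rewrite card_ord.
Qed.

Lemma arc_level x y :
  e x y = (vcomp x == vcomp y) && level_step (vlen x) (vlev x) (vlev y).
Proof.
rewrite e_phi /theta_arc -/(vcomp x) -/(vcomp y) -/(vpos x) -/(vpos y) -/(vlen x).
case: eqP => //= cxy; have lenxy : vlen y = vlen x by rewrite /vlen cxy.
have py : vpos y < vlen x by rewrite -lenxy vpos_lt.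
by rewrite /vlev lenxy theta_arc_level ?vpos_lt.
Qed.

Lemma walkb_level k u v :
  walkb e k u v = (vcomp u == vcomp v) && level_walk (vlen u) k (vlev u) (vlev v).
Proof.
elim: k u => [|k IH] u /=.
  rewrite /level_walk addn0 /= orbF; apply/eqP/andP => [-> //|[/eqP cuv /eqP]].
  exact: vertex_inj.
have [n_gt2 lu] := (vlen_gt2 u, vlev_lt u).
apply/existsP/andP => [[w] | [/eqP cuv /(level_walkS _ _ n_gt2 lu) [c cn]]].
  rewrite arc_level IH => /andP [/andP [/eqP cuw step] /andP [/eqP cwv walk]].
  split; first by rewrite cuw cwv.
  have lenw : vlen w = vlen u by rewrite /vlen cuw.
  apply/(level_walkS _ _ n_gt2 lu); exists (vlev w); first by rewrite -lenw vlev_lt.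
  by rewrite step -lenw walk.
move=> /andP [step walk]; have [w cw lw] := vertex_exists cn.
by exists w; rewrite arc_level IH cw lw eqxx step /vlen cw -cuv eqxx.
Qed.

Lemma is_dist_level u v k : is_dist e u v k =
  [&& vcomp u == vcomp v, vlev v <= vlev u & k == level_dist (vlen u) (vlev u) (vlev v)].
Proof.
rewrite /is_dist walkb_level.
under eq_forallb => j do rewrite walkb_level.
case: eqP => //= _; exact: level_walk_minE (vlen_gt2 u).
Qed.

Lemma ND_level (D : pred nat) v y : ND e D v y =
  [&& vcomp v == vcomp y, vlev y <= vlev v & D (level_dist (vlen v) (vlev v) (vlev y))].
Proof.
apply/existsP/idP => [[k] | /and3P [cvy yv Dd]].
  by rewrite is_dist_level => /andP [/and3P [-> -> /eqP <-]].
have dist_lt : level_dist (vlen v) (vlev v) (vlev y) < #|T|.+1.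
  by rewrite ltnS; apply/ltnW/(leq_trans _ (vlen_le_card v))/level_dist_lt;
    rewrite ?vlev_lt // ltnW // vlen_gt2.
by exists (Ordinal dist_lt); rewrite is_dist_level cvy yv eqxx.
Qed.

Definition level_dist_in (D : pred nat) (c : 'I_(size ns)) (a b : nat) : bool :=
  D (level_dist (nth 0 ns c) a b).

Lemma Dweight_below_sum (D : pred nat) (g : T -> nat) v : D 0 ->
  Dweight e D g v = g v + below_sum vcomp vlev (level_dist_in D) g v.
Proof.
move=> D0; have n2 : 1 < vlen v by apply/ltnW/vlen_gt2.
rewrite /Dweight (bigD1 v) /=; last by rewrite ND_level eqxx leqnn level_dist0.
congr (_ + _); apply: eq_bigl => x; rewrite ND_level /below eq_sym.
case: (vcomp x =P vcomp v) => [cxv|] //=.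
have -> : (x != v) = (vlev x != vlev v).
  by congr negb; apply/eqP/eqP => [-> // |]; apply: vertex_inj.
by rewrite ltn_neqAle; case: (vlev x != vlev v); rewrite ?andbT ?andbF.
Qed.

Lemma Dweight_sink (D : pred nat) (g : T -> nat) v :
  ~~ D 0 -> vlev v = 0 -> Dweight e D g v = 0.
Proof.
move=> nD0 lv0; rewrite /Dweight big_pred0 // => y.
rewrite ND_level lv0 leqn0; apply/negP => /and3P [_ /eqP ->].
by rewrite level_dist0 ?(negbTE nD0) // ltnW // vlen_gt2.
Qed.

Lemma theta_antimagic (D : pred nat) : D 0 -> D_antimagic e D.
Proof.
move=> D0.
have lev_down x b : b < vlev x -> exists2 y, vcomp y = vcomp x & vlev y = b.
  by move=> bx; apply: vertex_exists; apply: ltn_trans bx (vlev_lt x).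
have shift x a b : vlev x = a.+1 ->
    level_dist_in D (vcomp x) a b -> level_dist_in D (vcomp x) a.+1 b.+1.
  by move=> xa; rewrite /level_dist_in level_distSS // -xa vlev_lt.
have [g [g_inj g_range g_mono]] := greedy_labeling vertex_inj lev_down shift.
exists g; split=> // u v; rewrite !Dweight_below_sum // => eq_w.
by case: (ltngtP (g u) (g v)) => [lt | lt | /g_inj //]; have := g_mono _ _ lt; lia.
Qed.

Lemma theta_not_antimagic (D : pred nat) : 1 < size ns -> ~~ D 0 -> ~ D_antimagic e D.
Proof.
move=> ns2 nD0 [f [_ w_inj]].
have sink (c : 'I_(size ns)) : exists2 x, vcomp x = c & vlev x = 0.
  by apply: vertex_exists; apply: ltn_trans (len_gt2 c).
have [x0 cx0 lx0] := sink (Ordinal (ltnW ns2)); have [x1 cx1 lx1] := sink (Ordinal ns2).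
have /(congr1 vcomp) : x0 = x1 by apply: w_inj; rewrite !Dweight_sink.
by rewrite cx0 cx1 => /(congr1 val).
Qed.

End ThetaComponents.

Theorem mainTheorem19 (T : finType) (e : rel T) (D : pred nat)
  (hC : theta_2reg_multi e) (hD : distance_set e D) :
  D_antimagic e D <-> ex_minn (proj1 hD) = 0.
Proof.
have min0E : ex_minn (proj1 hD) = 0 <-> D 0.
  by case: ex_minnP => m Dm minm; split=> [<- // | /minm]; rewrite leqn0 => /eqP.
rewrite min0E; case: hC => ns [ns2 /allP ns_ge3 [phi [[psi phiK psiK] e_phi]]].
have len_gt2 (c : 'I_(size ns)) : 2 < nth 0 ns c by apply/ns_ge3/mem_nth.
split=> [antimagic | D0]; last exact: (theta_antimagic phiK psiK e_phi len_gt2 D0).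
apply/negPn/negP => nD0.
exact: (theta_not_antimagic phiK psiK e_phi len_gt2 ns2 nD0 antimagic).
Qed.
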